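(* Every Markov shift $X$ is Borel isomorphic to a Borel system of the form $W\sqcup\bigsqcup_{n\in\mathbb N}\Sigma(L_n)$, where $W$ is weakly wandering (an invariant Borel subsystem consisting of a weakly wandering set) and each $L_n$ is a loop graph, $\Sigma(L_n)$ denoting the corresponding Markov shift.
   Context: A Markov shift $\Sigma(G)$ is the left shift on the set of bi-infinite edge paths in a directed graph $G$ with countably (possibly finitely) many vertices and edges, with the product of discrete topologies; it is a Borel system (standard Borel space with a Borel automorphism). A Borel isomorphism of Borel systems is a Borel bijection with Borel inverse intertwining the actions. In a Borel system $(X,T)$, a Borel set $W$ is wandering if the sets $T^kW$, $k\in\mathbb Z$, are pairwise disjoint; a set is weakly wandering if it is a Borel subset of a countable union of wandering sets. A loop graph is a directed graph consisting of simple loops all based at a common vertex and otherwise pairwise non-intersecting; the associated Markov shift is a loop system. *)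

From Stdlib Require Import ZArith Arith Lia.
Open Scope Z_scope.

Record graph := Graph {
  vert : Type;
  edge : Type;
  src : edge -> vert;
  tgt : edge -> vert;
  vert_countable : exists c : vert -> nat, forall u v, c u = c v -> u = v;
  edge_countable : exists c : edge -> nat, forall e f, c e = c f -> e = f
}.

Definition is_path (G : graph) (x : Z -> edge G) : Prop :=
  forall n : Z, tgt G (x n) = src G (x (n + 1)).

Definition path (G : graph) : Type := { x : Z -> edge G | is_path G x }.

Definition shiftZ (G : graph) (k : Z) (x : path G) : path G.
Proof.
  refine (exist _ (fun n => proj1_sig x (n + k)) _).
  intro n. destruct x as [x hx]. simpl.
  replace (n + 1 + k) with ((n + k) + 1) by lia. apply hx.
Defined.

Definition shift (G : graph) (x : path G) : path G := shiftZ G 1 x.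

Definition sigma_algebra {T : Type} (M : (T -> Prop) -> Prop) : Prop :=
  M (fun _ => True) /\
  (forall A, M A -> M (fun x => ~ A x)) /\
  (forall A : nat -> T -> Prop, (forall n, M (A n)) -> M (fun x => exists n, A n x)).

Definition generated {T : Type} (C : (T -> Prop) -> Prop) (A : T -> Prop) : Prop :=
  forall M, sigma_algebra M -> (forall B, C B -> M B) -> M A.

(* Borel sets of Sigma(G): the product of discrete topologies on edge^Z is
   second countable with the cylinder sets as subbasis, so its Borel
   sigma-algebra (restricted to Sigma(G)) is generated by the cylinders. *)
Definition cylinder (G : graph) (B : path G -> Prop) : Prop :=
  exists (n : Z) (e : edge G), B = (fun x => proj1_sig x n = e).

Definition borel (G : graph) (A : path G -> Prop) : Prop := generated (cylinder G) A.

Definition union_space (L : nat -> graph) : Type := { n : nat & path (L n) }.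

Definition union_shift (L : nat -> graph) (u : union_space L) : union_space L :=
  existT _ (projT1 u) (shift (L (projT1 u)) (projT2 u)).

Definition union_borel (L : nat -> graph) (A : union_space L -> Prop) : Prop :=
  forall n : nat, borel (L n) (fun x => A (existT _ n x)).

Definition shift_set (G : graph) (k : Z) (W : path G -> Prop) : path G -> Prop :=
  fun x => exists w, W w /\ x = shiftZ G k w.

Definition wandering (G : graph) (W : path G -> Prop) : Prop :=
  borel G W /\
  forall j k : Z, j <> k -> forall x, ~ (shift_set G j W x /\ shift_set G k W x).

Definition weakly_wandering (G : graph) (W : path G -> Prop) : Prop :=
  borel G W /\
  exists U : nat -> path G -> Prop,
    (forall m, wandering G (U m)) /\ (forall x, W x -> exists m, U m x).

Definition invariant (G : graph) (W : path G -> Prop) : Prop :=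
  forall x, W (shift G x) <-> W x.

(* Loop graph: simple loops (indexed by I, loop i of length len i with edges
   f i 0, ..., f i (len i - 1)) all based at v0, otherwise pairwise disjoint,
   and the graph consists exactly of these loops. *)
Definition loop_graph (G : graph) : Prop :=
  exists (v0 : vert G) (I : Type) (len : I -> nat) (f : I -> nat -> edge G),
    (forall i, (0 < len i)%nat) /\
    (forall e, exists i j, (j < len i)%nat /\ f i j = e) /\
    (forall i j i' j', (j < len i)%nat -> (j' < len i')%nat ->
        f i j = f i' j' -> i = i' /\ j = j') /\
    (forall i, src G (f i 0%nat) = v0) /\
    (forall i, tgt G (f i (len i - 1)%nat) = v0) /\
    (forall i j, (S j < len i)%nat -> tgt G (f i j) = src G (f i (S j))) /\
    (forall i j, (0 < j < len i)%nat -> src G (f i j) <> v0) /\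
    (forall i j i' j', (0 < j < len i)%nat -> (0 < j' < len i')%nat ->
        src G (f i j) = src G (f i' j') -> i = i' /\ j = j') /\
    (forall v, v = v0 \/ exists i j, (0 < j < len i)%nat /\ src G (f i j) = v).

From Stdlib Require Import ZArith Arith Lia List Classical ClassicalEpsilon FunctionalExtensionality PropExtensionality ProofIrrelevance Cantor.
Open Scope Z_scope.

(* Code the vertices injectively by natural numbers. Call a path
   [n]-recurrent if [n] is the least code it visits and it visits the vertex
   of code [n] infinitely often in both directions. Cutting such a path at
   these visits writes it uniquely as a concatenation of excursions: loops at
   that vertex whose interior vertices have larger codes. So the [n]-recurrent
   paths are exactly the labels of the paths of the loop graph of all
   excursions at [n], and since each excursion is a finite word the labelling
   map is a Borel isomorphism onto this invariant Borel set. A path that is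
   [n]-recurrent for no [n] still has a least visited code, which it visits a
   first or a last time; the paths whose first (last) visit to a given vertex
   happens at time [p] form a wandering set, and there are countably many. *)

Lemma sig_ext {A : Type} {P : A -> Prop} (a b : {x | P x}) :
  proj1_sig a = proj1_sig b -> a = b.
Proof. apply eq_sig_hprop. intros; apply proof_irrelevance. Qed.

Lemma set_ext {T : Type} (A B : T -> Prop) : (forall x, A x <-> B x) -> A = B.
Proof. intro h. apply functional_extensionality; intro x. apply propositional_extensionality, h. Qed.

Lemma path_ext (H : graph) (x y : path H) :
  (forall m, proj1_sig x m = proj1_sig y m) -> x = y.
Proof. intro h. apply sig_ext, functional_extensionality, h. Qed.

Definition countable (T : Type) : Prop := exists f : T -> nat, forall a b, f a = f b -> a = b.

Lemma countable_nat : countable nat.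
Proof. exists (fun n => n); auto. Qed.

Lemma countable_bool : countable bool.
Proof. exists (fun b : bool => if b then 1%nat else 0%nat). intros [] []; easy. Qed.

Lemma countable_Z : countable Z.
Proof.
  exists (fun p => to_nat (Z.to_nat p, Z.to_nat (- p))). intros p q h.
  apply (f_equal of_nat) in h. rewrite !cancel_of_to in h. injection h; lia.
Qed.

Lemma countable_prod (A B : Type) : countable A -> countable B -> countable (A * B).
Proof.
  intros [f hf] [g hg]. exists (fun p => to_nat (f (fst p), g (snd p))).
  intros [a b] [a' b'] h. apply (f_equal of_nat) in h. rewrite !cancel_of_to in h.
  injection h; intros; f_equal; auto.
Qed.

Lemma countable_option (A : Type) : countable A -> countable (option A).
Proof.
  intros [f hf]. exists (fun o => match o with None => 0%nat | Some a => S (f a) end).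
  intros [a|] [b|] h; try discriminate; auto. injection h; intro; f_equal; auto.
Qed.

Lemma countable_list (A : Type) : countable A -> countable (list A).
Proof.
  intros [f hf].
  exists (fix code l := match l with nil => 0%nat | a :: l => S (to_nat (f a, code l)) end).
  induction a as [|a l IH]; intros [|b l'] h; try discriminate; auto.
  apply eq_add_S, (f_equal of_nat) in h. rewrite !cancel_of_to in h.
  injection h; intros; f_equal; auto.
Qed.

Lemma countable_sig (A : Type) (P : A -> Prop) : countable A -> countable {x | P x}.
Proof. intros [f hf]. exists (fun a => f (proj1_sig a)). intros a b h. apply sig_ext, hf, h. Qed.

Lemma fiber_cases (I T : Type) (f : I -> nat) (A : I -> T -> Prop) n :
  (forall i j, f i = f j -> i = j) ->
  (exists i, (fun x => exists j, f j = n /\ A j x) = A i) \/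
  (fun x => exists j, f j = n /\ A j x) = (fun _ => False).
Proof.
  intro hf. destruct (classic (exists i, f i = n)) as [[i hi]|hn].
  - left. exists i. apply set_ext; intro x. split.
    + intros [j [hj hx]]. rewrite (hf j i) in hx by congruence. exact hx.
    + intro hx. eauto.
  - right. apply set_ext; intro x. split; [|tauto]. intros [j [hj _]]. eauto.
Qed.

Section Generated.
Variables (T : Type) (C : (T -> Prop) -> Prop).

Lemma generated_gen A : C A -> generated C A.
Proof. intros hA M _ hM. exact (hM A hA). Qed.

Lemma generated_True : generated C (fun _ => True).
Proof. intros M [h _] _. exact h. Qed.

Lemma generated_compl A : generated C A -> generated C (fun x => ~ A x).
Proof. intros hA M hM hC. apply (proj1 (proj2 hM)), hA; auto. Qed.

Lemma generated_nat_union (A : nat -> T -> Prop) :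
  (forall n, generated C (A n)) -> generated C (fun x => exists n, A n x).
Proof. intros hA M hM hC. apply (proj2 (proj2 hM)). intro n. apply hA; auto. Qed.

Lemma generated_const (Q : Prop) : generated C (fun _ => Q).
Proof.
  destruct (classic Q) as [hQ|hQ].
  - replace (fun _ : T => Q) with (fun _ : T => True) by (apply set_ext; tauto).
    apply generated_True.
  - replace (fun _ : T => Q) with (fun _ : T => ~ True) by (apply set_ext; tauto).
    apply generated_compl, generated_True.
Qed.

Lemma generated_ex (I : Type) (A : I -> T -> Prop) : countable I ->
  (forall i, generated C (A i)) -> generated C (fun x => exists i, A i x).
Proof.
  intros [f hf] hA.
  replace (fun x => exists i, A i x) with (fun x => exists n, exists i, f i = n /\ A i x)
    by (apply set_ext; intro x; split; [intros [n [i [_ h]]] | intros [i h]]; eauto).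
  apply generated_nat_union. intro n.
  destruct (fiber_cases I T f A n hf) as [[i ->] | ->]; [apply hA | apply generated_const].
Qed.

Lemma generated_all (I : Type) (A : I -> T -> Prop) : countable I ->
  (forall i, generated C (A i)) -> generated C (fun x => forall i, A i x).
Proof.
  intros hI hA.
  replace (fun x => forall i, A i x) with (fun x => ~ exists i, ~ A i x).
  - apply generated_compl, generated_ex; auto. intro i. apply generated_compl, hA.
  - apply set_ext; intro x. split; [|firstorder].
    intros h i. apply NNPP. intro hn. eauto.
Qed.

Lemma generated_or A B : generated C A -> generated C B -> generated C (fun x => A x \/ B x).
Proof.
  intros hA hB.
  replace (fun x => A x \/ B x) with (fun x => exists b : bool, if b then A x else B x).
  - apply generated_ex; [apply countable_bool|]. intros []; auto.
  - apply set_ext; intro x. split; [intros [[] h]; auto | intros [h|h]; [exists true|exists false]; auto].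
Qed.

Lemma generated_and A B : generated C A -> generated C B -> generated C (fun x => A x /\ B x).
Proof.
  intros hA hB.
  replace (fun x => A x /\ B x) with (fun x => forall b : bool, if b then A x else B x).
  - apply generated_all; [apply countable_bool|]. intros []; auto.
  - apply set_ext; intro x. split; [intro h; exact (conj (h true) (h false)) | intros [] []; auto].
Qed.

Lemma generated_impl (Q : Prop) A : generated C A -> generated C (fun x => Q -> A x).
Proof.
  intro hA. replace (fun x => Q -> A x) with (fun x => ~ Q \/ A x).
  - apply generated_or; [apply generated_const | exact hA].
  - apply set_ext; intro x. split; [tauto|]. intro h. destruct (classic Q); tauto.
Qed.

Lemma generated_preimage (T' : Type) (C' : (T' -> Prop) -> Prop) (h : T -> T') :
  (forall B, C' B -> generated C (fun y => B (h y))) ->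
  forall A, generated C' A -> generated C (fun y => A (h y)).
Proof.
  intros hgen A hA. apply (hA (fun A => generated C (fun y => A (h y)))); [|exact hgen].
  split; [|split].
  - apply generated_True.
  - intros B hB. exact (generated_compl _ hB).
  - intros B hB. exact (generated_nat_union (fun n y => B n (h y)) hB).
Qed.

(* Injectivity is what makes images commute with complements. *)
Lemma generated_image (S : Type) (D : (S -> Prop) -> Prop) (psi : S -> T) :
  (forall y y', psi y = psi y' -> y = y') ->
  generated C (fun x => exists y, psi y = x) ->
  (forall B, D B -> generated C (fun x => exists y, psi y = x /\ B y)) ->
  forall B, generated D B -> generated C (fun x => exists y, psi y = x /\ B y).
Proof.
  intros inj himg hgen B hB.
  apply (hB (fun B => generated C (fun x => exists y, psi y = x /\ B y))); [|exact hgen].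
  split; [|split].
  - replace (fun x => exists y, psi y = x /\ True) with (fun x => exists y, psi y = x);
      [exact himg | apply set_ext; firstorder].
  - intros A hA.
    replace (fun x => exists y, psi y = x /\ ~ A y)
      with (fun x => (exists y, psi y = x) /\ ~ exists y, psi y = x /\ A y).
    + apply generated_and; [exact himg | apply generated_compl, hA].
    + apply set_ext; intro x. split.
      * intros [[y hy] hn]. exists y. split; auto. intro ha. apply hn. eauto.
      * intros [y [hy ha]]. split; [eauto|]. intros [y' [hy' ha']]. apply ha.
        rewrite (inj y y'); congruence.
  - intros A hA.
    replace (fun x => exists y, psi y = x /\ exists n, A n y)
      with (fun x => exists n y, psi y = x /\ A n y).
    + exact (generated_nat_union _ hA).
    + apply set_ext; firstorder.
Qed.

End Generated.

Lemma borel_cylinder (H : graph) n e : borel H (fun x => proj1_sig x n = e).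
Proof. apply generated_gen. exists n, e. reflexivity. Qed.

Lemma borel_coord (H : graph) (P : edge H -> Prop) n : borel H (fun x => P (proj1_sig x n)).
Proof.
  replace (fun x : path H => P (proj1_sig x n))
    with (fun x : path H => exists e, P e /\ proj1_sig x n = e)
    by (apply set_ext; intro x; split; [intros [e [h <-]] | exists (proj1_sig x n)]; auto).
  apply generated_ex; [exact (edge_countable H) | intro e].
  apply generated_and; [apply generated_const | apply borel_cylinder].
Qed.

Lemma wandering_False (H : graph) : wandering H (fun _ => False).
Proof.
  split; [apply generated_const|]. intros j k _ x [[w [[] _]] _].
Qed.

Lemma weakly_wandering_of_cover (H : graph) (I : Type) (A : I -> path H -> Prop) W :
  countable I -> borel H W -> (forall i, wandering H (A i)) ->
  (forall x, W x -> exists i, A i x) -> weakly_wandering H W.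
Proof.
  intros [f hf] hW hA hcov. split; [exact hW|].
  exists (fun n x => exists i, f i = n /\ A i x). split.
  - intro n. destruct (fiber_cases _ _ f A n hf) as [[i ->] | ->];
      [apply hA | apply wandering_False].
  - intros x hx. destruct (hcov x hx) as [i hi]. eauto.
Qed.

Lemma exists_last_le (P : Z -> Prop) m t0 : t0 <= m -> P t0 ->
  exists k, k <= m /\ P k /\ forall t, k < t <= m -> ~ P t.
Proof.
  assert (forall d t0, (Z.to_nat (m - t0) <= d)%nat -> t0 <= m -> P t0 ->
    exists k, k <= m /\ P k /\ forall t, k < t <= m -> ~ P t); eauto.
  induction d; intros t1 hd h0 p0;
    destruct (classic (exists t, t1 < t <= m /\ P t)) as [[t [ht pt]]|hn].
  - lia.
  - exists t1; repeat split; auto. intros t ht pt. apply hn; eauto.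
  - apply (IHd t); auto; lia.
  - exists t1; repeat split; auto. intros t ht pt. apply hn; eauto.
Qed.

Lemma exists_first_gt (P : Z -> Prop) m t0 : m < t0 -> P t0 ->
  exists q, m < q /\ P q /\ forall t, m < t < q -> ~ P t.
Proof.
  assert (forall d t0, (Z.to_nat (t0 - m) <= d)%nat -> m < t0 -> P t0 ->
    exists q, m < q /\ P q /\ forall t, m < t < q -> ~ P t); eauto.
  induction d; intros t1 hd h0 p0;
    destruct (classic (exists t, m < t < t1 /\ P t)) as [[t [ht pt]]|hn].
  - lia.
  - exists t1; repeat split; auto. intros t ht pt. apply hn; eauto.
  - apply (IHd t); auto; lia.
  - exists t1; repeat split; auto. intros t ht pt. apply hn; eauto.
Qed.

Lemma nth_window {A : Type} (X : Z -> A) k N t : (t < S N)%nat ->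
  nth t (X k :: map (fun i => X (k + Z.of_nat (S i))) (seq 0 N)) (X k) = X (k + Z.of_nat t).
Proof.
  intro h. destruct t as [|t]; cbn [nth].
  - f_equal; lia.
  - set (f := fun i => X (k + Z.of_nat (S i))).
    transitivity (nth t (map f (seq 0 N)) (f 0%nat)).
    + apply nth_indep. rewrite length_map, length_seq; lia.
    + rewrite map_nth, seq_nth by lia. reflexivity.
Qed.

Section Decomposition.
Variable G : graph.
Variable c : vert G -> nat.
Hypothesis c_inj : forall u v, c u = c v -> u = v.

Definition visits (n : nat) (X : Z -> edge G) (t : Z) : Prop := c (src G (X t)) = n.

(* Nonempty edge words, stored as (first edge, rest) so that the first edge
   is a default for [nth]. *)
Definition word : Type := (edge G * list (edge G))%type.
Definition word_list (w : word) : list (edge G) := fst w :: snd w.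
Definition wlen (w : word) : nat := S (length (snd w)).
Definition wnth (w : word) (j : nat) : edge G := nth j (word_list w) (fst w).

Definition excursion (n : nat) (w : word) : Prop :=
  (forall j, (S j < wlen w)%nat -> tgt G (wnth w j) = src G (wnth w (S j))) /\
  c (src G (fst w)) = n /\
  c (tgt G (wnth w (wlen w - 1))) = n /\
  (forall j, (0 < j < wlen w)%nat -> (n < c (src G (wnth w j)))%nat).

Definition Exc (n : nat) : Type := {w | excursion n w}.

(* The loop graph of all excursions at [n]: the base point is [None], and
   [Some (i, j)] is the source of the [j]-th edge of the loop [i]. *)
Definition loop_vert (n : nat) : Type :=
  option {p : Exc n * nat | (0 < snd p < wlen (proj1_sig (fst p)))%nat}.
Definition loop_edge (n : nat) : Type :=
  {p : Exc n * nat | (snd p < wlen (proj1_sig (fst p)))%nat}.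

Definition loop_src n (a : loop_edge n) : loop_vert n :=
  match lt_dec 0 (snd (proj1_sig a)) with
  | left h => Some (exist _ (proj1_sig a) (conj h (proj2_sig a)))
  | right _ => None
  end.

Definition loop_tgt n (a : loop_edge n) : loop_vert n :=
  match lt_dec (S (snd (proj1_sig a))) (wlen (proj1_sig (fst (proj1_sig a)))) with
  | left h => Some (exist (fun p : Exc n * nat => (0 < snd p < wlen (proj1_sig (fst p)))%nat)
                      (fst (proj1_sig a), S (snd (proj1_sig a))) (conj (Nat.lt_0_succ _) h))
  | right _ => None
  end.

Definition vertex_val n (v : loop_vert n) : option (Exc n * nat) :=
  option_map (@proj1_sig _ _) v.

Lemma vertex_val_inj n v w : vertex_val n v = vertex_val n w -> v = w.
Proof.
  destruct v as [v|], w as [w|]; simpl; intro h; try discriminate; auto.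
  injection h; intro; f_equal; apply sig_ext; auto.
Qed.

Lemma vertex_val_src n a : vertex_val n (loop_src n a) =
  if Nat.eqb (snd (proj1_sig a)) 0 then None else Some (proj1_sig a).
Proof.
  unfold loop_src. destruct (lt_dec _ _); destruct (Nat.eqb_spec (snd (proj1_sig a)) 0);
    simpl; auto; lia.
Qed.

Lemma vertex_val_tgt n a : vertex_val n (loop_tgt n a) =
  if Nat.ltb (S (snd (proj1_sig a))) (wlen (proj1_sig (fst (proj1_sig a))))
  then Some (fst (proj1_sig a), S (snd (proj1_sig a))) else None.
Proof.
  unfold loop_tgt. destruct (lt_dec _ _);
    destruct (Nat.ltb_spec (S (snd (proj1_sig a))) (wlen (proj1_sig (fst (proj1_sig a)))));
    simpl; auto; lia.
Qed.

Lemma countable_Exc n : countable (Exc n).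
Proof. apply countable_sig, countable_prod, countable_list; exact (edge_countable G). Qed.

Lemma countable_loop_vert n : countable (loop_vert n).
Proof. apply countable_option, countable_sig, countable_prod, countable_nat; apply countable_Exc. Qed.

Lemma countable_loop_edge n : countable (loop_edge n).
Proof. apply countable_sig, countable_prod, countable_nat; apply countable_Exc. Qed.

Definition loops (n : nat) : graph :=
  Graph (loop_vert n) (loop_edge n) (loop_src n) (loop_tgt n)
    (countable_loop_vert n) (countable_loop_edge n).

(* Indices are read modulo the length, to make the edge map total. *)
Definition loop_at n (i : Exc n) (j : nat) : loop_edge n :=
  exist (fun p : Exc n * nat => (snd p < wlen (proj1_sig (fst p)))%nat)
    (i, Nat.modulo j (wlen (proj1_sig i)))
    (Nat.mod_upper_bound j _ (Nat.neq_succ_0 _)).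

Lemma loops_loop_graph n : loop_graph (loops n).
Proof.
  unfold loop_graph. cbn [vert edge loops src tgt].
  exists None, (Exc n), (fun i => wlen (proj1_sig i)), (loop_at n).
  assert (hlen : forall i : Exc n, (0 < wlen (proj1_sig i))%nat) by (intro; unfold wlen; lia).
  split; [|split; [|split; [|split; [|split; [|split; [|split; [|split]]]]]]].
  - exact hlen.
  - intros [[i j] hj]. exists i, j. cbn [fst snd] in hj. split; auto.
    apply sig_ext. unfold loop_at. cbn [proj1_sig fst snd vertex_val option_map]. rewrite Nat.mod_small; auto.
  - intros i j i' j' h1 h2 h. apply (f_equal (@proj1_sig _ _)) in h. unfold loop_at in h.
    cbn [proj1_sig] in h. rewrite !Nat.mod_small in h by auto. injection h; auto.
  - intro i. apply vertex_val_inj. rewrite vertex_val_src. unfold loop_at. cbn [proj1_sig fst snd vertex_val option_map].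
    rewrite Nat.Div0.mod_0_l. reflexivity.
  - intro i. apply vertex_val_inj. rewrite vertex_val_tgt. unfold loop_at. cbn [proj1_sig fst snd vertex_val option_map].
    specialize (hlen i). rewrite Nat.mod_small by lia.
    destruct (Nat.ltb_spec (S (wlen (proj1_sig i) - 1)) (wlen (proj1_sig i))); auto; lia.
  - intros i j h. apply vertex_val_inj. rewrite vertex_val_tgt, vertex_val_src. unfold loop_at. cbn [proj1_sig fst snd vertex_val option_map].
    rewrite !Nat.mod_small by lia.
    destruct (Nat.ltb_spec (S j) (wlen (proj1_sig i))), (Nat.eqb_spec (S j) 0);
      try lia; reflexivity.
  - intros i j h heq. apply (f_equal (vertex_val n)) in heq. rewrite vertex_val_src in heq.
    unfold loop_at in heq. cbn [proj1_sig fst snd vertex_val option_map] in heq. rewrite Nat.mod_small in heq by lia.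
    destruct (Nat.eqb_spec j 0); [lia | discriminate].
  - intros i j i' j' h1 h2 heq. apply (f_equal (vertex_val n)) in heq.
    rewrite !vertex_val_src in heq. unfold loop_at in heq. cbn [proj1_sig fst snd] in heq.
    rewrite !Nat.mod_small in heq by lia.
    destruct (Nat.eqb_spec j 0), (Nat.eqb_spec j' 0); try lia. injection heq; auto.
  - intros [[[i j] hij]|]; [right | left; reflexivity].
    exists i, j. cbn [fst snd] in hij. split; auto.
    apply vertex_val_inj. rewrite vertex_val_src. unfold loop_at. cbn [proj1_sig fst snd vertex_val option_map].
    rewrite Nat.mod_small by lia. destruct (Nat.eqb_spec j 0); [lia | reflexivity].
Qed.

Definition label n (a : loop_edge n) : edge G :=
  wnth (proj1_sig (fst (proj1_sig a))) (snd (proj1_sig a)).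

Lemma embed_is_path n (y : path (loops n)) : is_path G (fun m => label n (proj1_sig y m)).
Proof.
  intro m. destruct y as [y hy]. cbn [proj1_sig]. pose proof (hy m) as h. cbn [loops tgt src] in h.
  apply (f_equal (vertex_val n)) in h. rewrite vertex_val_tgt, vertex_val_src in h.
  unfold label.
  destruct (y m) as [[[w gw] j] hj], (y (m + 1)) as [[[w' gw'] j'] hj']. cbn [proj1_sig fst snd] in *.
  destruct (Nat.ltb_spec (S j) (wlen w)), (Nat.eqb_spec j' 0); try discriminate.
  - injection h; intros <- <-. apply (proj1 gw); auto.
  - subst j'. apply c_inj. destruct gw as [_ [_ [hend _]]], gw' as [_ [hstart _]].
    replace j with (wlen w - 1)%nat by lia. rewrite hend. exact (eq_sym hstart).
Qed.

Definition embed n (y : path (loops n)) : path G :=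
  exist _ (fun m => label n (proj1_sig y m)) (embed_is_path n y).

Definition occurs_at (X : Z -> edge G) (k : Z) (w : word) : Prop :=
  forall t, (t < wlen w)%nat -> X (k + Z.of_nat t) = wnth w t.

Lemma occurs_at_start n X k w : excursion n w -> occurs_at X k w -> visits n X k.
Proof.
  intros [_ [h _]] hf. unfold visits. specialize (hf 0%nat ltac:(unfold wlen; lia)).
  rewrite Z.add_0_r in hf. rewrite hf. exact h.
Qed.

Lemma occurs_at_interior n X k w t : excursion n w -> occurs_at X k w -> (0 < t < wlen w)%nat ->
  (n < c (src G (X (k + Z.of_nat t)%Z)))%nat.
Proof. intros [_ [_ [_ h]]] hf ht. rewrite hf by lia. apply h; auto. Qed.

Lemma occurs_at_end n X k w : is_path G X -> excursion n w -> occurs_at X k w ->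
  visits n X (k + Z.of_nat (wlen w)).
Proof.
  intros hp [_ [_ [h _]]] hf. unfold visits.
  replace (k + Z.of_nat (wlen w)) with ((k + Z.of_nat (wlen w - 1)) + 1) by (unfold wlen; lia).
  rewrite <- hp, hf by (unfold wlen; lia). exact h.
Qed.

(* An excursion ends at the first return to its base point, so two
   occurrences overlapping at time [m] coincide. *)
Lemma occurs_at_unique n X k w k' w' m : is_path G X -> excursion n w -> excursion n w' ->
  occurs_at X k w -> occurs_at X k' w' ->
  k <= m < k + Z.of_nat (wlen w) -> k' <= m < k' + Z.of_nat (wlen w') -> k = k' /\ w = w'.
Proof.
  intros hp g1 g2 f1 f2 r1 r2.
  assert (kk : k = k').
  { destruct (Z.lt_trichotomy k k') as [h|[h|h]]; auto; exfalso.
    - pose proof (occurs_at_start n X k' w' g2 f2) as s. unfold visits in s.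
      pose proof (occurs_at_interior n X k w (Z.to_nat (k' - k)) g1 f1 ltac:(lia)) as mm.
      rewrite Z2Nat.id in mm by lia. replace (k + (k' - k)) with k' in mm by lia. lia.
    - pose proof (occurs_at_start n X k w g1 f1) as s. unfold visits in s.
      pose proof (occurs_at_interior n X k' w' (Z.to_nat (k - k')) g2 f2 ltac:(lia)) as mm.
      rewrite Z2Nat.id in mm by lia. replace (k' + (k - k')) with k in mm by lia. lia. }
  subst k'.
  assert (ln : wlen w = wlen w').
  { destruct (Nat.lt_trichotomy (wlen w) (wlen w')) as [h|[h|h]]; auto; exfalso.
    - pose proof (occurs_at_end n X k w hp g1 f1) as s. unfold visits in s.
      pose proof (occurs_at_interior n X k w' (wlen w) g2 f2 ltac:(unfold wlen in *; lia)). lia.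
    - pose proof (occurs_at_end n X k w' hp g2 f2) as s. unfold visits in s.
      pose proof (occurs_at_interior n X k w (wlen w') g1 f1 ltac:(unfold wlen in *; lia)). lia. }
  split; auto.
  destruct w as [a r], w' as [a' r'].
  assert (he : word_list (a, r) = word_list (a', r')).
  { apply nth_ext with (d := a) (d' := a').
    - unfold wlen in ln; cbn in *. lia.
    - intros t ht. pose proof (f1 t) as e1. pose proof (f2 t) as e2. unfold wnth in e1, e2.
      cbn [fst] in e1, e2. rewrite <- e1, <- e2; auto; unfold wlen in *; cbn in *; lia. }
  unfold word_list in he; cbn [fst snd] in he. injection he; intros; subst; auto.
Qed.

Lemma loop_step_fwd n (y : path (loops n)) k i t :
  proj1_sig (proj1_sig y k) = (i, t) -> (S t < wlen (proj1_sig i))%nat ->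
  proj1_sig (proj1_sig y (k + 1)) = (i, S t).
Proof.
  intros h1 h2. pose proof (proj2_sig y k) as h. cbn [loops tgt src] in h.
  apply (f_equal (vertex_val n)) in h. rewrite vertex_val_tgt, vertex_val_src, h1 in h.
  cbn [fst snd] in h.
  destruct (Nat.ltb_spec (S t) (wlen (proj1_sig i))); try lia.
  destruct (Nat.eqb_spec (snd (proj1_sig (proj1_sig y (k + 1)))) 0); try discriminate.
  injection h; auto.
Qed.

Lemma loop_step_bwd n (y : path (loops n)) k i t :
  proj1_sig (proj1_sig y (k + 1)) = (i, S t) -> proj1_sig (proj1_sig y k) = (i, t).
Proof.
  intros h1. pose proof (proj2_sig y k) as h. cbn [loops tgt src] in h.
  apply (f_equal (vertex_val n)) in h. rewrite vertex_val_tgt, vertex_val_src, h1 in h.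
  cbn [fst snd] in h.
  destruct (proj1_sig (proj1_sig y k)) as [i' t'] eqn:E. cbn [fst snd] in h.
  destruct (Nat.ltb_spec (S t') (wlen (proj1_sig i'))); try discriminate.
  injection h; intros; subst; auto.
Qed.

Lemma loop_traverse n (y : path (loops n)) m i j : proj1_sig (proj1_sig y m) = (i, j) ->
  forall t, (t < wlen (proj1_sig i))%nat ->
  proj1_sig (proj1_sig y (m - Z.of_nat j + Z.of_nat t)) = (i, t).
Proof.
  intros h0 t ht.
  assert (hj : (j < wlen (proj1_sig i))%nat).
  { pose proof (proj2_sig (proj1_sig y m)) as hh. cbn beta in hh. rewrite h0 in hh. exact hh. }
  assert (back : forall d, (d <= j)%nat ->
            proj1_sig (proj1_sig y (m - Z.of_nat d)) = (i, (j - d)%nat)).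
  { induction d; intro hd.
    - rewrite Z.sub_0_r, Nat.sub_0_r. auto.
    - apply loop_step_bwd. replace (m - Z.of_nat (S d) + 1) with (m - Z.of_nat d) by lia.
      rewrite IHd by lia. f_equal. lia. }
  assert (fwd : forall d, (j + d < wlen (proj1_sig i))%nat ->
            proj1_sig (proj1_sig y (m + Z.of_nat d)) = (i, (j + d)%nat)).
  { induction d; intro hd.
    - rewrite Z.add_0_r, Nat.add_0_r. auto.
    - replace (m + Z.of_nat (S d)) with (m + Z.of_nat d + 1) by lia.
      replace (j + S d)%nat with (S (j + d)) by lia.
      apply loop_step_fwd; [apply IHd | ]; lia. }
  destruct (Nat.le_gt_cases t j).
  - replace (m - Z.of_nat j + Z.of_nat t) with (m - Z.of_nat (j - t)) by lia.
    rewrite back by lia. f_equal. lia.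
  - replace (m - Z.of_nat j + Z.of_nat t) with (m + Z.of_nat (t - j)) by lia.
    rewrite fwd by lia. f_equal. lia.
Qed.

Lemma embed_occurs_at n (y : path (loops n)) m i j : proj1_sig (proj1_sig y m) = (i, j) ->
  occurs_at (proj1_sig (embed n y)) (m - Z.of_nat j) (proj1_sig i) /\
  (j < wlen (proj1_sig i))%nat.
Proof.
  intro h0. split.
  - intros t ht. cbn [embed proj1_sig]. unfold label. rewrite (loop_traverse n y m i j h0 t ht).
    reflexivity.
  - pose proof (proj2_sig (proj1_sig y m)) as hh. cbn beta in hh. rewrite h0 in hh. exact hh.
Qed.

Lemma embed_edge_eq n (y : path (loops n)) (x : path G) m (a : loop_edge n) :
  occurs_at (proj1_sig x) (m - Z.of_nat (snd (proj1_sig a))) (proj1_sig (fst (proj1_sig a))) ->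
  embed n y = x -> proj1_sig y m = a.
Proof.
  intros hf <-. apply sig_ext.
  destruct (proj1_sig a) as [i j] eqn:E. cbn [fst snd] in hf.
  assert (hj : (j < wlen (proj1_sig i))%nat).
  { pose proof (proj2_sig a) as hh. cbn beta in hh. rewrite E in hh. exact hh. }
  destruct (proj1_sig (proj1_sig y m)) as [i' j'] eqn:E2.
  destruct (embed_occurs_at n y m i' j' E2) as [f2 b2].
  destruct (occurs_at_unique n _ _ _ _ _ m (proj2_sig (embed n y)) (proj2_sig i) (proj2_sig i')
              hf f2) as [e1 e2]; try lia.
  f_equal; [apply sig_ext; auto | lia].
Qed.

Lemma embed_inj n y y' : embed n y = embed n y' -> y = y'.
Proof.
  intro h. apply path_ext. intro m.
  destruct (proj1_sig (proj1_sig y m)) as [i j] eqn:E.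
  destruct (embed_occurs_at n y m i j E) as [f _].
  symmetry. apply (embed_edge_eq n y' (embed n y)); auto. rewrite E. exact f.
Qed.

Definition min_recurrent (n : nat) (X : Z -> edge G) : Prop :=
  (forall t, (n <= c (src G (X t)))%nat) /\
  (forall m, exists t, t <= m /\ visits n X t) /\
  (forall m, exists t, m <= t /\ visits n X t).

Lemma embed_min_recurrent n y : min_recurrent n (proj1_sig (embed n y)).
Proof.
  split; [|split].
  - intro t. cbn [embed proj1_sig]. unfold label.
    destruct (proj1_sig (proj1_sig y t)) as [i j] eqn:E. cbn [fst snd].
    destruct (embed_occurs_at n y t i j E) as [_ b].
    destruct (proj2_sig i) as [_ [hstart [_ hint]]].
    destruct j as [|j]; [unfold wnth; cbn [nth word_list]; lia|].
    pose proof (hint (S j) ltac:(lia)). lia.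
  - intro m. destruct (proj1_sig (proj1_sig y m)) as [i j] eqn:E.
    destruct (embed_occurs_at n y m i j E) as [f b].
    exists (m - Z.of_nat j). split; [lia|]. eapply occurs_at_start; eauto. apply (proj2_sig i).
  - intro m. destruct (proj1_sig (proj1_sig y m)) as [i j] eqn:E.
    destruct (embed_occurs_at n y m i j E) as [f b].
    exists (m - Z.of_nat j + Z.of_nat (wlen (proj1_sig i))). split; [lia|].
    eapply occurs_at_end; eauto. apply (proj2_sig (embed n y)). apply (proj2_sig i).
Qed.

(* The excursion around time [m] runs from the last visit to [n] at or
   before [m] to the first visit after [m]. *)
Lemma excursion_around n X m : is_path G X -> min_recurrent n X ->
  exists k (i : Exc n), k <= m < k + Z.of_nat (wlen (proj1_sig i)) /\ occurs_at X k (proj1_sig i).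
Proof.
  intros hp [hge [hpast hfut]].
  destruct (hpast m) as [t0 [h0 v0]].
  destruct (exists_last_le (visits n X) m t0 h0 v0) as [k [hk [vk nk]]].
  destruct (hfut (m + 1)) as [t1 [h1 v1]].
  destruct (exists_first_gt (visits n X) m t1 ltac:(lia) v1) as [q [hq [vq nq]]].
  set (N := Z.to_nat (q - k)).
  set (w := (X k, map (fun i => X (k + Z.of_nat (S i))) (seq 0 (N - 1)))).
  assert (hlen : wlen w = N)
    by (unfold wlen, w; cbn [snd]; rewrite length_map, length_seq; unfold N; lia).
  assert (hn : forall t, (t < N)%nat -> wnth w t = X (k + Z.of_nat t)).
  { intros t ht. unfold wnth, word_list, w. cbn [fst snd]. apply nth_window. lia. }
  assert (g : excursion n w).
  { split; [|split; [|split]].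
    - intros j hj. rewrite hlen in hj. rewrite !hn by lia. rewrite hp. do 2 f_equal. lia.
    - exact vk.
    - rewrite hlen, hn by lia. rewrite hp.
      replace (k + Z.of_nat (N - 1) + 1) with q by (unfold N; lia). exact vq.
    - intros j hj. rewrite hlen in hj. rewrite hn by lia.
      assert (c (src G (X (k + Z.of_nat j))) <> n).
      { intro e. destruct (Z_le_gt_dec (k + Z.of_nat j) m).
        - apply (nk (k + Z.of_nat j)); [lia | exact e].
        - apply (nq (k + Z.of_nat j)); [unfold N in hj; lia | exact e]. }
      pose proof (hge (k + Z.of_nat j)). lia. }
  exists k, (exist _ w g). cbn [proj1_sig]. rewrite hlen. split.
  - unfold N; lia.
  - intros t ht. rewrite hn; auto. rewrite <- hlen; auto.
Qed.

Lemma embed_surj n (x : path G) : min_recurrent n (proj1_sig x) -> exists y, embed n y = x.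
Proof.
  intro hY. destruct x as [X hX]. cbn [proj1_sig] in hY.
  assert (F : forall m, exists p : Z * Exc n,
    fst p <= m < fst p + Z.of_nat (wlen (proj1_sig (snd p))) /\ occurs_at X (fst p) (proj1_sig (snd p))).
  { intro m. destruct (excursion_around n X m hX hY) as [k [i h]]. exists (k, i); exact h. }
  destruct (choice _ F) as [f hf].
  assert (A : forall m, exists a : loop_edge n, proj1_sig a = (snd (f m), Z.to_nat (m - fst (f m)))).
  { intro m. destruct (hf m) as [[h1 h2] _].
    unshelve eexists (exist _ (snd (f m), Z.to_nat (m - fst (f m))) _); [cbn [fst snd]; lia | reflexivity]. }
  destruct (choice _ A) as [ya hya].
  assert (hpath : is_path (loops n) ya).
  { intro m. cbn [loops tgt src]. apply vertex_val_inj.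
    rewrite vertex_val_tgt, vertex_val_src, !hya. cbn [fst snd].
    generalize (hf m) (hf (m + 1)).
    destruct (f m) as [k i], (f (m + 1)) as [k' i']; cbn [fst snd]. intros [c1 f1] [c2 f2].
    destruct (Nat.ltb_spec (S (Z.to_nat (m - k))) (wlen (proj1_sig i))).
    - destruct (occurs_at_unique n X k (proj1_sig i) k' (proj1_sig i') (m + 1) hX
                  (proj2_sig i) (proj2_sig i') f1 f2) as [e1 e2]; try lia.
      subst k'. apply sig_ext in e2. subst i'.
      destruct (Nat.eqb_spec (Z.to_nat (m + 1 - k)) 0); try lia. do 2 f_equal. lia.
    - assert (k' = m + 1).
      { destruct (Z.lt_trichotomy k' (m + 1)) as [h|[h|h]]; try lia.
        destruct (occurs_at_unique n X k (proj1_sig i) k' (proj1_sig i') m hX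
                    (proj2_sig i) (proj2_sig i') f1 f2) as [e1 e2]; try lia.
        subst k'. rewrite e2 in *. lia. }
      subst k'. destruct (Nat.eqb_spec (Z.to_nat (m + 1 - (m + 1))) 0); try lia. reflexivity. }
  exists (exist _ ya hpath). apply path_ext. intro m. cbn [embed proj1_sig]. unfold label.
  rewrite hya. cbn [fst snd].
  destruct (hf m) as [c1 f1]. rewrite <- f1 by lia. f_equal. lia.
Qed.

Lemma range_embed n x : (exists y, embed n y = x) <-> min_recurrent n (proj1_sig x).
Proof.
  split; [intros [y <-]; apply embed_min_recurrent | apply embed_surj].
Qed.

Lemma embed_cylinder n m (a : loop_edge n) x :
  (exists y, embed n y = x /\ proj1_sig y m = a) <->
  min_recurrent n (proj1_sig x) /\
  occurs_at (proj1_sig x) (m - Z.of_nat (snd (proj1_sig a))) (proj1_sig (fst (proj1_sig a))).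
Proof.
  split.
  - intros [y [<- <-]]. split; [apply embed_min_recurrent|].
    destruct (proj1_sig (proj1_sig y m)) as [i j] eqn:E.
    exact (proj1 (embed_occurs_at n y m i j E)).
  - intros [hY hf]. destruct (embed_surj n x hY) as [y hy].
    exists y. split; [exact hy | exact (embed_edge_eq n y x m a hf hy)].
Qed.

Lemma min_recurrent_shift n X : min_recurrent n (fun t => X (t + 1)) <-> min_recurrent n X.
Proof.
  unfold min_recurrent, visits. split; intros [h1 [h2 h3]]; split; [|split| |split].
  - intro t. specialize (h1 (t - 1)). replace (t - 1 + 1) with t in h1 by lia. auto.
  - intro m. destruct (h2 (m - 1)) as [t [ht v]]. exists (t + 1). split; auto. lia.
  - intro m. destruct (h3 (m - 1)) as [t [ht v]]. exists (t + 1). split; auto. lia.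
  - intro t. apply h1.
  - intro m. destruct (h2 (m + 1)) as [t [ht v]]. exists (t - 1).
    replace (t - 1 + 1) with t by lia. split; auto. lia.
  - intro m. destruct (h3 (m + 1)) as [t [ht v]]. exists (t - 1).
    replace (t - 1 + 1) with t by lia. split; auto. lia.
Qed.

Lemma borel_visits n t : borel G (fun x => visits n (proj1_sig x) t).
Proof. exact (borel_coord G (fun e => c (src G e) = n) t). Qed.

Lemma borel_min_recurrent n : borel G (fun x => min_recurrent n (proj1_sig x)).
Proof.
  apply generated_and; [|apply generated_and];
    apply generated_all; try apply countable_Z; intro m.
  - exact (borel_coord G (fun e => (n <= c (src G e))%nat) m).
  - apply generated_ex; [apply countable_Z | intro t].
    apply generated_and; [apply generated_const | apply borel_visits].
  - apply generated_ex; [apply countable_Z | intro t].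
    apply generated_and; [apply generated_const | apply borel_visits].
Qed.

Lemma borel_occurs_at k w : borel G (fun x => occurs_at (proj1_sig x) k w).
Proof.
  apply generated_all; [apply countable_nat | intro t].
  apply generated_impl, borel_cylinder.
Qed.

Lemma borel_range_embed n : borel G (fun x => exists y, embed n y = x).
Proof.
  replace (fun x => exists y, embed n y = x) with (fun x : path G => min_recurrent n (proj1_sig x)).
  - apply borel_min_recurrent.
  - apply set_ext; intro x. symmetry. apply range_embed.
Qed.

Lemma borel_image_embed n (B : path (loops n) -> Prop) :
  borel (loops n) B -> borel G (fun x => exists y, embed n y = x /\ B y).
Proof.
  apply generated_image; [apply embed_inj | apply borel_range_embed |].
  intros B' [m [a ->]].
  replace (fun x => exists y, embed n y = x /\ proj1_sig y m = a)
    with (fun x : path G => min_recurrent n (proj1_sig x) /\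
            occurs_at (proj1_sig x) (m - Z.of_nat (snd (proj1_sig a))) (proj1_sig (fst (proj1_sig a)))).
  - apply generated_and; [apply borel_min_recurrent | apply borel_occurs_at].
  - apply set_ext; intro x. symmetry. apply embed_cylinder.
Qed.

Lemma min_recurrent_unique n n' X : min_recurrent n X -> min_recurrent n' X -> n = n'.
Proof.
  intros [a1 [b1 _]] [a2 [b2 _]].
  destruct (b1 0) as [t1 [_ v1]], (b2 0) as [t2 [_ v2]]. unfold visits in *.
  specialize (a1 t2). specialize (a2 t1). lia.
Qed.

Definition dissipative (x : path G) : Prop := ~ exists n, min_recurrent n (proj1_sig x).

Lemma borel_dissipative : borel G dissipative.
Proof.
  apply generated_compl, generated_ex; [apply countable_nat | apply borel_min_recurrent].
Qed.

Lemma dissipative_invariant : invariant G dissipative.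
Proof.
  intro x. unfold dissipative. cbn [shift shiftZ proj1_sig].
  split; intros h [n hn]; apply h; exists n; apply (min_recurrent_shift n (proj1_sig x)), hn.
Qed.

Definition extreme_visit (first : bool) (k : nat) (p : Z) (x : path G) : Prop :=
  visits k (proj1_sig x) p /\
  forall t, (if first then t < p else p < t) -> ~ visits k (proj1_sig x) t.

Lemma extreme_visit_wandering first k p : wandering G (extreme_visit first k p).
Proof.
  split.
  - apply generated_and; [apply borel_visits|].
    apply generated_all; [apply countable_Z | intro t].
    apply generated_impl, generated_compl, borel_visits.
  - intros j i hji x [[w [[v1 n1] ->]] [w' [[v2 n2] he]]]. apply hji.
    assert (hx : forall t, proj1_sig w (t + j) = proj1_sig w' (t + i)).
    { intro t. change (proj1_sig (shiftZ G j w) t = proj1_sig (shiftZ G i w') t).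
      rewrite he. reflexivity. }
    unfold visits in *.
    destruct (Z.lt_trichotomy j i) as [h|[h|h]]; auto; exfalso; destruct first.
    + apply (n1 (p - i + j)); [lia|]. rewrite hx. replace (p - i + i) with p by lia. auto.
    + apply (n2 (p - j + i)); [lia|]. rewrite <- hx. replace (p - j + j) with p by lia. auto.
    + apply (n2 (p - j + i)); [lia|]. rewrite <- hx. replace (p - j + j) with p by lia. auto.
    + apply (n1 (p - i + j)); [lia|]. rewrite hx. replace (p - i + i) with p by lia. auto.
Qed.

(* Let [n] be the least code visited by [x]; not being [min_recurrent n],
   [x] has a first or a last visit to [n]. *)
Lemma dissipative_extreme_visit x : dissipative x -> exists first k p, extreme_visit first k p x.
Proof.
  intro hW. set (X := proj1_sig x).
  destruct (dec_inh_nat_subset_has_unique_least_element (fun k => exists t, visits k X t))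
    as [n [[[t0 v0] hmin] _]]; [intro; apply classic | exists (c (src G (X 0))), 0; reflexivity |].
  assert (hge : forall t, (n <= c (src G (X t)))%nat)
    by (intro t; apply hmin; exists t; reflexivity).
  destruct (classic (forall m, exists t, t <= m /\ visits n X t)) as [hp|hp].
  - destruct (classic (forall m, exists t, m <= t /\ visits n X t)) as [hf|hf].
    + exfalso. apply hW. exists n. split; auto.
    + apply not_all_ex_not in hf. destruct hf as [m hm].
      assert (t0 < m) by (apply Z.nle_gt; intro; apply hm; exists t0; auto).
      destruct (exists_last_le (visits n X) m t0 ltac:(lia) v0) as [k [hk [vk nk]]].
      exists false, n, k. split; auto. intros t ht vt.
      destruct (Z_le_gt_dec t m); [apply (nk t); auto; lia | apply hm; exists t; split; auto; lia].
  - apply not_all_ex_not in hp. destruct hp as [m hm].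
    assert (m < t0) by (apply Z.nle_gt; intro; apply hm; exists t0; auto).
    destruct (exists_first_gt (visits n X) m t0 ltac:(lia) v0) as [q [hq [vq nq]]].
    exists true, n, q. split; auto. intros t ht vt.
    destruct (Z_le_gt_dec t m); [apply hm; exists t; auto | apply (nq t); auto; lia].
Qed.

Lemma dissipative_weakly_wandering : weakly_wandering G dissipative.
Proof.
  apply (weakly_wandering_of_cover G (bool * nat * Z)
           (fun i => extreme_visit (fst (fst i)) (snd (fst i)) (snd i))).
  - apply countable_prod; [apply countable_prod|]; auto using countable_bool, countable_nat, countable_Z.
  - exact borel_dissipative.
  - intro i. apply extreme_visit_wandering.
  - intros x hx. destruct (dissipative_extreme_visit x hx) as [first [k [p h]]].
    exists (first, k, p). exact h.
Qed.

Definition union_embed (u : union_space loops) : path G := embed (projT1 u) (projT2 u).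

Lemma union_embed_inj u v : union_embed u = union_embed v -> u = v.
Proof.
  destruct u as [n y], v as [n' y']. unfold union_embed. cbn [projT1 projT2]. intro h.
  assert (n = n') as <-.
  { apply (min_recurrent_unique n n' (proj1_sig (embed n y))); [apply embed_min_recurrent|].
    rewrite h. apply embed_min_recurrent. }
  apply embed_inj in h. subst. reflexivity.
Qed.

Lemma range_union_embed x : ~ dissipative x <-> exists u, union_embed u = x.
Proof.
  unfold dissipative. split.
  - intro h. apply NNPP in h. destruct h as [n hn]. apply range_embed in hn.
    destruct hn as [y hy]. exists (existT _ n y). exact hy.
  - intros [[n y] hy] h. apply h. exists n. apply range_embed. exists y. exact hy.
Qed.

Lemma union_embed_shift u : union_embed (union_shift loops u) = shift G (union_embed u).
Proof. apply path_ext. reflexivity. Qed.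

Lemma union_embed_measurable A : borel G A -> union_borel loops (fun u => A (union_embed u)).
Proof.
  intros hA n. apply (generated_preimage _ (cylinder (loops n)) _ (cylinder G) (embed n)); [|exact hA].
  intros B [m [e ->]]. exact (borel_coord (loops n) (fun a => label n a = e) m).
Qed.

Lemma borel_image_union_embed B :
  union_borel loops B -> borel G (fun x => exists u, B u /\ union_embed u = x).
Proof.
  intro hB.
  replace (fun x => exists u, B u /\ union_embed u = x)
    with (fun x => exists n y, embed n y = x /\ B (existT _ n y)).
  - apply generated_ex; [apply countable_nat | intro n]. apply borel_image_embed, hB.
  - apply set_ext; intro x. split.
    + intros [n [y [h1 h2]]]. exists (existT _ n y). auto.
    + intros [[n y] [h1 h2]]. exists n, y. auto.
Qed.

End Decomposition.

Theorem lemma3p6 (G : graph) :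
  exists W : path G -> Prop,
    borel G W /\ invariant G W /\ weakly_wandering G W /\
    exists L : nat -> graph,
      (forall n, loop_graph (L n)) /\
      exists psi : union_space L -> path G,
        (forall u v, psi u = psi v -> u = v) /\
        (forall x, ~ W x <-> exists u, psi u = x) /\
        (forall u, psi (union_shift L u) = shift G (psi u)) /\
        (forall A, borel G A -> union_borel L (fun u => A (psi u))) /\
        (forall B, union_borel L B -> borel G (fun x => exists u, B u /\ psi u = x)).
Proof.
  destruct (vert_countable G) as [c hc].
  exists (dissipative G c).
  split; [apply borel_dissipative|].
  split; [apply dissipative_invariant|].
  split; [apply dissipative_weakly_wandering|].
  exists (loops G c). split; [apply loops_loop_graph|].
  exists (union_embed G c hc).
  split; [apply union_embed_inj|].
  split; [apply range_union_embed|].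
  split; [apply union_embed_shift|].
  split; [apply union_embed_measurable | apply borel_image_union_embed].
Qed.
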